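(* For $z\in L_T$, $s>0$ and $T>e$, \[P(X(sT)=r(T)z)\ge\exp\Big(-a(T)T\big(q|z|+\mathcal{E}^1_T(s,|z|)\big)\Big).\]
   Context: $X(u)$, $u\ge0$, is a continuous-time simple symmetric random walk on $\mathbb{Z}^d$ started at $0$, jumping to each of its $2d$ neighbours at rate $1$, under a probability measure $P$. $|\cdot|$ is the $\ell_1$-norm. $\alpha>d$, $q=d/(\alpha-d)$, $a(T)=(T/\log T)^q$, $r(T)=(T/\log T)^{q+1}$, $L_T=\{z\in\mathbb{R}^d: r(T)z\in\mathbb{Z}^d\}$. For $s>0$, $R\ge0$: $\mathcal{E}^1_T(s,R)=\frac{R}{\log T}(\log R-\log s)+\frac{2ds}{a(T)}$ (with the convention $0\log 0=0$). *)

From HB Require Import structures.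
From mathcomp Require Import all_boot all_order all_algebra.
From mathcomp Require Import all_classical all_reals all_analysis.
Set Implicit Arguments. Unset Strict Implicit. Unset Printing Implicit Defensive.
Import Order.TTheory GRing.Theory Num.Theory.
Local Open Scope ring_scope.

Section Defs.
Variable R : realType.

Definition step (d : nat) (st : 'I_d * bool) : {ffun 'I_d -> int} :=
  [ffun j => if st.1 == j then (if st.2 then 1 else -1) else 0].

Definition walk_end (d n : nat) (w : n.-tuple ('I_d * bool)) : {ffun 'I_d -> int} :=
  [ffun j => \sum_(st <- w) step st j].

Definition srw_prob (d n : nat) (x : {ffun 'I_d -> int}) : R :=
  (#|[set w : n.-tuple ('I_d * bool) | walk_end w == x]|)%:R / ((2 * d) ^ n)%:R.

(* Law of the continuous-time simple symmetric random walk X(t) on Z^d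
   started at 0, jumping to each of its 2d neighbours at rate 1:
   P(X(t) = x) = sum_n e^{-2dt} (2dt)^n / n! * P(S_n = x). *)
Definition ctrw_prob (d : nat) (t : R) (x : {ffun 'I_d -> int}) : R :=
  limn (fun N => \sum_(0 <= n < N)
           (expR (- (2 * d%:R * t)) * (2 * d%:R * t) ^+ n / (n`!)%:R
             * srw_prob n x)).

Definition l1 (d : nat) (z : 'I_d -> R) : R := \sum_(i < d) `|z i|.

Definition qexp (d : nat) (alpha : R) : R := d%:R / (alpha - d%:R).
Definition aT (d : nat) (alpha T : R) : R := (T / ln T) `^ (qexp d alpha).
Definition rT (d : nat) (alpha T : R) : R := (T / ln T) `^ (qexp d alpha + 1).

(* E^1_T(s,R) = R/log T (log R - log s) + 2ds/a(T); with ln 0 = 0 in the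
   library, R*(ln R - ln s) = 0 at R = 0, matching 0 log 0 = 0. *)
Definition E1 (d : nat) (alpha T s Rr : R) : R :=
  Rr / ln T * (ln Rr - ln s) + 2 * d%:R * s / aT d alpha T.

End Defs.

(* The walk reaches k in n = |k|_1 steps along at least one path, and n jumps
   of the Poisson clock occur by time t with probability e^{-2dt} (2dt)^n / n!,
   so P(X(t) = k) >= e^{-2dt} t^n / n! >= e^{-2dt} (t/n)^n.  With t = sT and
   n = r(T)|z| = a(T) T |z| / log T, taking logarithms and using
   log r(T) = (q+1)(log T - log log T) turns this into the claimed bound with
   the slack n (q+1) log log T >= 0. *)

From mathcomp Require Import all_boot all_order all_algebra.
From mathcomp Require Import all_classical all_reals all_analysis.
From mathcomp Require Import ring lra.
Import Order.TTheory GRing.Theory Num.Theory numFieldNormedType.Exports.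
Set Implicit Arguments. Unset Strict Implicit.
Local Open Scope ring_scope.

Lemma leq_fact_expn n : (n`! <= n ^ n)%N.
Proof.
elim: n => // n IH; rewrite factS expnS leq_mul //.
by apply: leq_trans IH _; case: n => // n; rewrite leq_exp2r.
Qed.

Section DiscreteWalk.
Variables (R : realType) (d : nat).

Definition straight_path (k : {ffun 'I_d -> int}) : seq ('I_d * bool) :=
  flatten [seq nseq `|k i|%N (i, (0 <= k i)) | i <- enum 'I_d].

Lemma size_straight_path (k : {ffun 'I_d -> int}) :
  size (straight_path k) = (\sum_(i < d) `|k i|)%N.
Proof.
rewrite /straight_path size_flatten /shape -map_comp sumnE big_map.
by rewrite -[RHS]big_enum; apply: eq_bigr => i _; rewrite /= size_nseq.
Qed.

Lemma sign_muln_abs (x : int) : (if 0 <= x then 1 else -1) *+ `|x|%N = x.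
Proof.
case: x => m /=; first by rewrite natz.
by rewrite -[Negz m]/(- (m.+1)%:Z) -natz mulNrn.
Qed.

Lemma walk_end_straight_path n (k : {ffun 'I_d -> int}) (w : n.-tuple ('I_d * bool)) :
  val w = straight_path k -> walk_end w = k.
Proof.
move=> wE; apply/ffunP => j; rewrite ffunE wE big_flatten /= big_map.
under eq_bigr => i _ do rewrite big_nseq iter_addr_0.
rewrite big_enum /= (bigD1 j) //= big1 ?addr0; first by rewrite ffunE eqxx sign_muln_abs.
by move=> i /negbTE ij; rewrite ffunE /= ij mul0rn.
Qed.

Lemma srw_prob_ge0 n (x : {ffun 'I_d -> int}) : 0 <= srw_prob R n x.
Proof. by rewrite divr_ge0. Qed.

Lemma srw_prob_le1 n (x : {ffun 'I_d -> int}) : srw_prob R n x <= 1.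
Proof.
have : (#|[set w : n.-tuple ('I_d * bool) | walk_end w == x]| <= (2 * d) ^ n)%N.
  apply: leq_trans (max_card _) _.
  by rewrite card_tuple card_prod card_ord card_bool mulnC.
rewrite /srw_prob; case: (posnP ((2 * d) ^ n)) => [->|dn_gt0 card_le].
  by rewrite invr0 mulr0.
by rewrite ler_pdivrMr ?ltr0n // mul1r ler_nat.
Qed.

Lemma srw_prob_reachable n (x : {ffun 'I_d -> int}) :
  (exists w : n.-tuple ('I_d * bool), walk_end w = x) ->
  ((2 * d) ^ n)%:R^-1 <= srw_prob R n x.
Proof.
case=> w wx; rewrite /srw_prob -[X in X <= _]mul1r ler_wpM2r // ler1n.
by apply/card_gt0P; exists w; rewrite inE wx.
Qed.

Lemma srw_prob_l1 (k : {ffun 'I_d -> int}) :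
  ((2 * d) ^ (\sum_(i < d) `|k i|))%:R^-1 <= srw_prob R (\sum_(i < d) `|k i|) k.
Proof.
apply: srw_prob_reachable.
have size_path : size (straight_path k) == (\sum_(i < d) `|k i|)%N.
  by rewrite size_straight_path.
by exists (Tuple size_path); apply: walk_end_straight_path.
Qed.

End DiscreteWalk.

Section ContinuousWalk.
Variables (R : realType) (d : nat) (t : R).
Hypothesis t_ge0 : 0 <= t.

Let poisson_term (k : {ffun 'I_d -> int}) (n : nat) : R :=
  expR (- (2 * d%:R * t)) * (2 * d%:R * t) ^+ n / (n`!)%:R * srw_prob R n k.

Lemma ctrw_prob_ge_term k n : poisson_term k n <= ctrw_prob t k.
Proof.
have dt_ge0 : 0 <= 2 * d%:R * t by rewrite !mulr_ge0.
have term_ge0 m : 0 <= poisson_term k m.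
  by rewrite !mulr_ge0 ?expR_ge0 ?exprn_ge0 ?srw_prob_ge0.
have sum_nondecr : {homo series (poisson_term k) : m p / (m <= p)%N >-> m <= p}.
  by apply: nondecreasing_series => m _ _; exact: term_ge0.
(* Dominated by the exponential series of 2dt, since e^{-2dt} <= 1 and srw_prob <= 1. *)
have sum_cvg : cvgn (series (poisson_term k) : R^nat).
  apply: (series_le_cvg (v_ := exp_coeff (2 * d%:R * t))) => //.
  - by move=> m; rewrite /exp_coeff /= divr_ge0 // exprn_ge0.
  - move=> m; rewrite /poisson_term /exp_coeff /= -[X in _ <= X]mulr1.
    rewrite ler_pM ?srw_prob_ge0 ?srw_prob_le1 ?divr_ge0 ?mulr_ge0 ?expR_ge0 ?exprn_ge0 //.
    rewrite -mulrA -[X in _ <= X]mul1r ler_wpM2r ?divr_ge0 ?exprn_ge0 //.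
    by rewrite expR_le1 oppr_le0.
  - exact: is_cvg_series_exp_coeff.
apply: le_trans (nondecreasing_cvgn_le sum_nondecr sum_cvg n.+1).
rewrite seriesSr -[X in X <= _]add0r lerD2r.
by apply: sumr_ge0 => i _; exact: term_ge0.
Qed.

Lemma ctrw_prob_ge_l1 (k : {ffun 'I_d -> int}) : (0 < d)%N ->
  expR (- (2 * d%:R * t)) * (t / (\sum_(i < d) `|k i|)%N%:R) ^+ (\sum_(i < d) `|k i|)
    <= ctrw_prob t k.
Proof.
set n := (\sum_(i < d) _)%N; move=> d_gt0; apply: le_trans _ (ctrw_prob_ge_term k n).
have dn_gt0 : 0 < ((2 * d) ^ n)%:R :> R by rewrite ltr0n expn_gt0 muln_gt0 d_gt0.
apply: le_trans (_ : _ <= expR (- (2 * d%:R * t)) * t ^+ n / (n`!)%:R) _.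
  rewrite -!mulrA ler_wpM2l ?expR_ge0 // expr_div_n ler_wpM2l ?exprn_ge0 //.
  have nn_gt0 : (0 < n ^ n)%N by rewrite expn_gt0; case: (n).
  by rewrite -natrX lef_pV2 ?posrE ?ltr0n ?fact_gt0 // ler_nat leq_fact_expn.
have d2_neq0 : (2 * d%:R : R) ^+ n != 0 by rewrite -natrM -natrX gt_eqF.
have -> : expR (- (2 * d%:R * t)) * t ^+ n / (n`!)%:R
    = expR (- (2 * d%:R * t)) * (2 * d%:R * t) ^+ n / (n`!)%:R * ((2 * d) ^ n)%:R^-1.
  by rewrite exprMn natrX natrM; field; rewrite d2_neq0 pnatr_eq0 -lt0n fact_gt0.
rewrite ler_wpM2l ?srw_prob_l1 //.
by rewrite divr_ge0 ?mulr_ge0 ?expR_ge0 ?exprn_ge0 // mulr_ge0.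
Qed.

End ContinuousWalk.

Lemma expR_natmul_ln_div (R : realType) (t : R) (n : nat) : 0 < t ->
  expR (n%:R * (ln t - ln n%:R)) = (t / n%:R) ^+ n.
Proof.
move=> t_gt0; case: n => [|n]; first by rewrite mul0r expR0 expr0.
by rewrite -lnV ?posrE // -lnM ?posrE ?invr_gt0 // expRM_natl lnK // posrE divr_gt0.
Qed.

Lemma l1_lattice_point (R : realType) d (r : R) (z : 'I_d -> R) (k : {ffun 'I_d -> int}) :
  0 < r -> (forall i, r * z i = (k i)%:~R) -> l1 z = (\sum_(i < d) `|k i|)%N%:R / r.
Proof.
move=> r_gt0 rzk; rewrite /l1 natr_sum mulr_suml; apply: eq_bigr => i _.
have -> : z i = (k i)%:~R / r by rewrite -rzk mulrAC divff ?mul1r // gt_eqF.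
by rewrite normrM normfV (gtr0_norm r_gt0) -intr_norm.
Qed.

Section Scales.
Variables (R : realType) (d : nat) (alpha T : R).
Hypotheses (d_gt0 : (0 < d)%N) (alpha_gt_d : d%:R < alpha) (T_gt_e : expR 1 < T).

Let T_gt0 : 0 < T. Proof. by apply: lt_trans T_gt_e; rewrite expR_gt0. Qed.

Lemma lnT_gt1 : 1 < ln T.
Proof. by rewrite -[X in X < _](expRK 1) ltr_ln ?posrE ?expR_gt0. Qed.

Let lnT_gt0 : 0 < ln T. Proof. by apply: lt_trans lnT_gt1. Qed.

Lemma qexp_gt0 : 0 < qexp d alpha.
Proof. by rewrite divr_gt0 ?ltr0n // subr_gt0. Qed.

Lemma aT_gt0 : 0 < aT d alpha T.
Proof. by rewrite powR_gt0 // divr_gt0. Qed.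

Lemma rT_gt0 : 0 < rT d alpha T.
Proof. by rewrite powR_gt0 // divr_gt0. Qed.

Lemma rTE : rT d alpha T = T / ln T * aT d alpha T.
Proof.
have c_gt0 : 0 < T / ln T by rewrite divr_gt0.
by rewrite /rT /aT powRD ?(gt_eqF c_gt0) ?implybT // powRr1 ?ltW // mulrC.
Qed.

Lemma ln_rT : ln (rT d alpha T) = (qexp d alpha + 1) * (ln T - ln (ln T)).
Proof. by rewrite ln_powR lnM ?posrE ?invr_gt0 // lnV ?posrE. Qed.

(* The two sides differ by n (q+1) log log T. *)
Lemma E1_exponent_ge (s : R) (n : nat) : 0 < s ->
  - (aT d alpha T * T * (qexp d alpha * (n%:R / rT d alpha T)
                          + E1 d alpha T s (n%:R / rT d alpha T)))
    <= - (2 * d%:R * (s * T)) + n%:R * (ln (s * T) - ln n%:R).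
Proof.
set L := n%:R / _; move=> s_gt0.
have a_gt0 := aT_gt0; have r_gt0 := rT_gt0; have q_gt0 := qexp_gt0.
have lnlnT_gt0 : 0 < ln (ln T) by rewrite ln_gt0 // lnT_gt1.
have nlnL : n%:R * ln L = n%:R * (ln n%:R - ln (rT d alpha T)).
  case: n @L => [|n] L; first by rewrite !mul0r.
  by rewrite lnM ?posrE ?invr_gt0 ?ltr0n // lnV ?posrE.
have -> : aT d alpha T * T * (qexp d alpha * L + E1 d alpha T s L)
    = qexp d alpha * n%:R * ln T + n%:R * ln L - n%:R * ln s + 2 * d%:R * (s * T).
  by rewrite /E1 /L rTE; field; rewrite !gt_eqF.
rewrite nlnL ln_rT lnM ?posrE //.
have : 0 <= n%:R * ((qexp d alpha + 1) * ln (ln T)).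
  by rewrite mulr_ge0 // mulr_ge0 // ltW // addr_gt0.
lra.
Qed.

End Scales.

Theorem lemma2p3 (R : realType) (d : nat) (alpha : R)
    (hd : (0 < d)%N) (halpha : d%:R < alpha)
    (T s : R) (hT : expR 1 < T) (hs : 0 < s)
    (z : 'I_d -> R) (k : {ffun 'I_d -> int})
    (hz : forall i, rT d alpha T * z i = (k i)%:~R) :
  expR (- (aT d alpha T * T * (qexp d alpha * l1 z + E1 d alpha T s (l1 z))))
    <= ctrw_prob (s * T) k.
Proof.
have sT_gt0 : 0 < s * T by rewrite mulr_gt0 // (lt_trans _ hT) ?expR_gt0.
rewrite (l1_lattice_point (rT_gt0 d alpha hT) hz).
apply: le_trans (ctrw_prob_ge_l1 (ltW sT_gt0) k hd).
rewrite -expR_natmul_ln_div // -expRD ler_expR.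
exact: E1_exponent_ge.
Qed.
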